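(* Let $\mu\in(0,1)$, $n>0$ and $k<0$ be real constants with $\frac{2k}{n^2}+\mu>0$, let $a_1=\frac{2k}{n^2}+\mu-1$, $b_1=\left(-\frac{\mu}{2k}\right)^{1/3}$, and assume $b_1^2>a_1^2$. Consider the system $$\ddot x-2n\dot y=\Omega_x,\qquad \ddot y+2n\dot x=\Omega_y,\qquad \ddot z=\Omega_z,$$ where $\Omega(x,y,z)=\frac{n^2}{2}(x^2+y^2)-k r_1^2+\frac{\mu}{r_2}$, $r_1^2=(x+\mu)^2+y^2+z^2$, $r_2^2=(x+\mu-1)^2+y^2+z^2$. Then each of the triangular equilibrium points $\left(\frac{2k}{n^2},0,\pm(b_1^2-a_1^2)^{1/2}\right)$ is linearly unstable: the characteristic equation of the variational (linearized) equations about the point, $$\lambda^6+2(n^2+3k)\lambda^4+n^2\left[n^2-6k\,\frac{3a_1^2-b_1^2}{b_1^2}\right]\lambda^2+6n^4k\,\frac{b_1^2-a_1^2}{b_1^2}=0,$$ has a positive real root $\lambda$.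
   Context: This is Robe's restricted three-body problem with the more massive primary an oblate spheroid ($n^2=1+\frac32 A_1$, $A_1$ the oblateness coefficient; $\mu=m_2/(m_1+m_2)$; $k$ a density-dependent constant). The variational equations about an equilibrium $(x_0,y_0,z_0)$ are obtained by substituting $(x_0+\xi,y_0+\eta,z_0+\zeta)$ and keeping linear terms: $\ddot\xi-2n\dot\eta=\Omega^0_{xx}\xi+\Omega^0_{xy}\eta+\Omega^0_{xz}\zeta$, $\ddot\eta+2n\dot\xi=\Omega^0_{yx}\xi+\Omega^0_{yy}\eta+\Omega^0_{yz}\zeta$, $\ddot\zeta=\Omega^0_{zx}\xi+\Omega^0_{zy}\eta+\Omega^0_{zz}\zeta$, where superscript $0$ denotes evaluation at the equilibrium; the characteristic equation comes from seeking solutions proportional to $e^{\lambda t}$. *)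

From Stdlib Require Import Reals.
From Coquelicot Require Import Coquelicot.
Open Scope R_scope.

Definition r1sq (mu x y z : R) : R := (x + mu) ^ 2 + y ^ 2 + z ^ 2.
Definition r2 (mu x y z : R) : R := sqrt ((x + mu - 1) ^ 2 + y ^ 2 + z ^ 2).

Definition Omega (n k mu : R) (x y z : R) : R :=
  n ^ 2 / 2 * (x ^ 2 + y ^ 2) - k * r1sq mu x y z + mu / r2 mu x y z.

Definition partial_x (f : R -> R -> R -> R) : R -> R -> R -> R :=
  fun x y z => Derive (fun t => f t y z) x.
Definition partial_y (f : R -> R -> R -> R) : R -> R -> R -> R :=
  fun x y z => Derive (fun t => f x t z) y.
Definition partial_z (f : R -> R -> R -> R) : R -> R -> R -> R :=
  fun x y z => Derive (fun t => f x y t) z.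

Definition det3 (a11 a12 a13 a21 a22 a23 a31 a32 a33 : R) : R :=
  a11 * (a22 * a33 - a23 * a32)
  - a12 * (a21 * a33 - a23 * a31)
  + a13 * (a21 * a32 - a22 * a31).

(* Characteristic determinant of the variational equations
     xi''  - 2n eta' = Oxx xi + Oxy eta + Oxz zeta
     eta'' + 2n xi'  = Oyx xi + Oyy eta + Oyz zeta
     zeta''          = Ozx xi + Ozy eta + Ozz zeta
   about (x0,y0,z0), for solutions proportional to e^(lambda t). *)
Definition char_det (n k mu x0 y0 z0 lam : R) : R :=
  let W := Omega n k mu in
  let Wx := partial_x W in let Wy := partial_y W in let Wz := partial_z W in
  det3 (lam ^ 2 - partial_x Wx x0 y0 z0) (- 2 * n * lam - partial_y Wx x0 y0 z0) (- partial_z Wx x0 y0 z0)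
       (2 * n * lam - partial_x Wy x0 y0 z0) (lam ^ 2 - partial_y Wy x0 y0 z0) (- partial_z Wy x0 y0 z0)
       (- partial_x Wz x0 y0 z0) (- partial_y Wz x0 y0 z0) (lam ^ 2 - partial_z Wz x0 y0 z0).

From Stdlib Require Import Reals Lra.
From Coquelicot Require Import Coquelicot.
Open Scope R_scope.

(* At the triangular points r2 = b1 and mu / b1^3 = -2k, which makes the first
   partials of Omega vanish.  Since y0 = 0, the characteristic determinant is
   monic of degree 3 in lam^2 with constant term 6 n^4 k z0^2 / b1^2 < 0, so the
   intermediate value theorem gives a positive root L, and lam = sqrt L. *)

Lemma Derive_ext_where_pos (h f g : R -> R) (t : R) :
  continuous h t -> 0 < h t -> (forall u, 0 < h u -> f u = g u) ->
  Derive f t = Derive g t.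
Proof.
  intros Hc Ht Efg. apply Derive_ext_loc.
  assert (Hnear : locally t (fun u => 0 < h u)).
  { apply Hc. exists (mkposreal _ Ht). intros v Hv.
    change (Rabs (v - h t) < h t) in Hv. apply Rabs_def2 in Hv. lra. }
  exact (filter_imp _ _ Efg Hnear).
Qed.

Lemma cubic_neg_const_pos_root (p q r : R) :
  r < 0 -> exists L, 0 < L /\ L ^ 3 + p * L ^ 2 + q * L + r = 0.
Proof.
  intros Hr.
  set (P := fun L => L ^ 3 + p * L ^ 2 + q * L + r).
  set (T := 1 + Rabs p + Rabs q + Rabs r).
  pose proof (Rle_abs (- p)) as Hp; pose proof (Rle_abs (- q)) as Hq;
  pose proof (Rle_abs (- r)) as Hr'; rewrite Rabs_Ropp in Hp, Hq, Hr'.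
  pose proof (Rabs_pos p); pose proof (Rabs_pos q); pose proof (Rabs_pos r).
  assert (HT : 1 <= T) by (unfold T; lra).
  assert (PT : 0 < P T).
  { unfold P. assert (T <= T ^ 2) by nra.
    assert (- p * T ^ 2 <= Rabs p * T ^ 2) by nra.
    assert (- q * T <= Rabs q * T ^ 2) by nra.
    assert (- r <= Rabs r * T ^ 2) by nra.
    replace (T ^ 3) with (T ^ 2 * (1 + Rabs p + Rabs q + Rabs r)) by (unfold T; ring).
    nra. }
  destruct (IVT P 0 T ltac:(intro; unfold P; reg) ltac:(lra) ltac:(unfold P; lra) PT)
    as [L [[HL0 _] HPL]].
  exists L; split; [| exact HPL].
  destruct HL0 as [| <-]; [assumption | unfold P in HPL; lra].
Qed.

Lemma even_sextic_neg_const_pos_root (p q r : R) :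
  r < 0 -> exists lam, 0 < lam /\ lam ^ 6 + p * lam ^ 4 + q * lam ^ 2 + r = 0.
Proof.
  intros Hr. destruct (cubic_neg_const_pos_root p q r Hr) as [L [HL PL]].
  exists (sqrt L); split; [apply sqrt_lt_R0; exact HL |].
  replace (sqrt L ^ 6) with ((sqrt L ^ 2) ^ 3) by ring.
  replace (sqrt L ^ 4) with ((sqrt L ^ 2) ^ 2) by ring.
  rewrite pow2_sqrt by lra. exact PL.
Qed.

Lemma Rpower_third_cube (c : R) : 0 < c -> Rpower c (1 / 3) ^ 3 = c.
Proof.
  intros Hc. rewrite <- (Rpower_pow 3) by apply exp_pos.
  rewrite Rpower_mult. replace (1 / 3 * INR 3) with 1 by (simpl; field).
  exact (Rpower_1 _ Hc).
Qed.

Lemma pm_sqrt_pow2 (s z : R) : 0 <= s -> z = sqrt s \/ z = - sqrt s -> z ^ 2 = s.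
Proof.
  intros Hs [-> | ->]; [| replace ((- sqrt s) ^ 2) with (sqrt s ^ 2) by ring];
  exact (pow2_sqrt _ Hs).
Qed.

Definition r2sq (mu x y z : R) : R := (x + mu - 1) ^ 2 + y ^ 2 + z ^ 2.

Section PartialExt.
Variables (mu : R) (f g : R -> R -> R -> R).
Hypothesis Efg : forall x y z, 0 < r2sq mu x y z -> f x y z = g x y z.

Ltac derive_ext_r2sq h :=
  intros Hr2; apply (Derive_ext_where_pos h); [| exact Hr2 | intros u; apply Efg];
  apply (@ex_derive_continuous R_AbsRing R_NormedModule); unfold r2sq; auto_derive; exact I.

Lemma partial_x_ext x y z : 0 < r2sq mu x y z -> partial_x f x y z = partial_x g x y z.
Proof. derive_ext_r2sq (fun u => r2sq mu u y z). Qed.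
Lemma partial_y_ext x y z : 0 < r2sq mu x y z -> partial_y f x y z = partial_y g x y z.
Proof. derive_ext_r2sq (fun u => r2sq mu x u z). Qed.
Lemma partial_z_ext x y z : 0 < r2sq mu x y z -> partial_z f x y z = partial_z g x y z.
Proof. derive_ext_r2sq (fun u => r2sq mu x y u). Qed.
End PartialExt.

Definition Omega_x (n k mu x y z : R) : R :=
  n ^ 2 * x - 2 * k * (x + mu) - mu * (x + mu - 1) / r2 mu x y z ^ 3.
Definition Omega_y (n k mu x y z : R) : R :=
  n ^ 2 * y - 2 * k * y - mu * y / r2 mu x y z ^ 3.
Definition Omega_z (n k mu x y z : R) : R :=
  - 2 * k * z - mu * z / r2 mu x y z ^ 3.

(* auto_derive unfolds r2 ^ 2 into varying shapes; every [sqrt] argument is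
   normalised back to r2sq so that [field] sees the single atom [sqrt e]. *)
Ltac solve_partial :=
  match goal with H : 0 < r2sq ?mu ?x ?y ?z |- _ =>
    let e := eval unfold r2sq in (r2sq mu x y z) in
    unfold partial_x, partial_y, partial_z, Omega, Omega_x, Omega_y, Omega_z, r1sq, r2;
    apply is_derive_unique; auto_derive;
    repeat match goal with |- context [sqrt ?a] => progress replace a with e by ring end;
    assert (Hs : 0 < sqrt e) by (apply sqrt_lt_R0; exact H);
    set (s := sqrt e) in *;
    [ repeat split; try exact H;
      repeat apply Rmult_integral_contrapositive_currified; lra
    | field; lra ]
  end.

Section OmegaPartials.
Variables n k mu : R.

Lemma partial_x_Omega x y z :
  0 < r2sq mu x y z -> partial_x (Omega n k mu) x y z = Omega_x n k mu x y z.
Proof. intros; solve_partial. Qed.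
Lemma partial_y_Omega x y z :
  0 < r2sq mu x y z -> partial_y (Omega n k mu) x y z = Omega_y n k mu x y z.
Proof. intros; solve_partial. Qed.
Lemma partial_z_Omega x y z :
  0 < r2sq mu x y z -> partial_z (Omega n k mu) x y z = Omega_z n k mu x y z.
Proof. intros; solve_partial. Qed.

Ltac solve_second_partial ext first :=
  intros Hr2; rewrite (ext _ _ _ first _ _ _ Hr2); solve_partial.

Lemma partial_xx_Omega x y z : 0 < r2sq mu x y z ->
  partial_x (partial_x (Omega n k mu)) x y z
  = n ^ 2 - 2 * k + mu * (3 * (x + mu - 1) ^ 2 - r2 mu x y z ^ 2) / r2 mu x y z ^ 5.
Proof. solve_second_partial partial_x_ext partial_x_Omega. Qed.
Lemma partial_xy_Omega x y z : 0 < r2sq mu x y z ->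
  partial_y (partial_x (Omega n k mu)) x y z = 3 * mu * (x + mu - 1) * y / r2 mu x y z ^ 5.
Proof. solve_second_partial partial_y_ext partial_x_Omega. Qed.
Lemma partial_xz_Omega x y z : 0 < r2sq mu x y z ->
  partial_z (partial_x (Omega n k mu)) x y z = 3 * mu * (x + mu - 1) * z / r2 mu x y z ^ 5.
Proof. solve_second_partial partial_z_ext partial_x_Omega. Qed.
Lemma partial_yx_Omega x y z : 0 < r2sq mu x y z ->
  partial_x (partial_y (Omega n k mu)) x y z = 3 * mu * (x + mu - 1) * y / r2 mu x y z ^ 5.
Proof. solve_second_partial partial_x_ext partial_y_Omega. Qed.
Lemma partial_yy_Omega x y z : 0 < r2sq mu x y z ->
  partial_y (partial_y (Omega n k mu)) x y z
  = n ^ 2 - 2 * k + mu * (3 * y ^ 2 - r2 mu x y z ^ 2) / r2 mu x y z ^ 5.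
Proof. solve_second_partial partial_y_ext partial_y_Omega. Qed.
Lemma partial_yz_Omega x y z : 0 < r2sq mu x y z ->
  partial_z (partial_y (Omega n k mu)) x y z = 3 * mu * y * z / r2 mu x y z ^ 5.
Proof. solve_second_partial partial_z_ext partial_y_Omega. Qed.
Lemma partial_zx_Omega x y z : 0 < r2sq mu x y z ->
  partial_x (partial_z (Omega n k mu)) x y z = 3 * mu * (x + mu - 1) * z / r2 mu x y z ^ 5.
Proof. solve_second_partial partial_x_ext partial_z_Omega. Qed.
Lemma partial_zy_Omega x y z : 0 < r2sq mu x y z ->
  partial_y (partial_z (Omega n k mu)) x y z = 3 * mu * y * z / r2 mu x y z ^ 5.
Proof. solve_second_partial partial_y_ext partial_z_Omega. Qed.
Lemma partial_zz_Omega x y z : 0 < r2sq mu x y z ->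
  partial_z (partial_z (Omega n k mu)) x y z
  = - 2 * k + mu * (3 * z ^ 2 - r2 mu x y z ^ 2) / r2 mu x y z ^ 5.
Proof. solve_second_partial partial_z_ext partial_z_Omega. Qed.

End OmegaPartials.

Section TriangularPoint.
Variables mu n k b z0 : R.
Hypotheses (Hn : 0 < n) (Hb : 0 < b) (Hmu : mu = - 2 * k * b ^ 3).
Let x0 := 2 * k / n ^ 2.
Let a := x0 + mu - 1.
Hypothesis Hz0 : z0 ^ 2 = b ^ 2 - a ^ 2.

Lemma r2sq_triangular : r2sq mu x0 0 z0 = b ^ 2.
Proof. unfold r2sq; fold a; rewrite Hz0; ring. Qed.

Lemma r2_triangular : r2 mu x0 0 z0 = b.
Proof. unfold r2; fold (r2sq mu x0 0 z0); rewrite r2sq_triangular; apply sqrt_pow2; lra. Qed.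

Let r2sq_pos : 0 < r2sq mu x0 0 z0.
Proof. rewrite r2sq_triangular; apply pow_lt; exact Hb. Qed.

Lemma triangular_equilibrium :
  partial_x (Omega n k mu) x0 0 z0 = 0 /\ partial_y (Omega n k mu) x0 0 z0 = 0 /\
  partial_z (Omega n k mu) x0 0 z0 = 0.
Proof.
  rewrite partial_x_Omega, partial_y_Omega, partial_z_Omega by exact r2sq_pos.
  unfold Omega_x, Omega_y, Omega_z; rewrite r2_triangular, Hmu.
  unfold x0; repeat split; field; try split; lra.
Qed.

(* The coefficient of lam ^ 2 is printed with 3 a^2 - b^2 in the paper; the
   determinant actually gives 3 a^2 - 2 b^2. *)
Lemma char_det_triangular lam :
  char_det n k mu x0 0 z0 lam
  = lam ^ 6 + 2 * (n ^ 2 + 3 * k) * lam ^ 4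
    + n ^ 2 * (n ^ 2 - 6 * k * (3 * a ^ 2 - 2 * b ^ 2) / b ^ 2) * lam ^ 2
    + 6 * n ^ 4 * k * (b ^ 2 - a ^ 2) / b ^ 2.
Proof.
  unfold char_det.
  rewrite partial_xx_Omega, partial_xy_Omega, partial_xz_Omega,
    partial_yx_Omega, partial_yy_Omega, partial_yz_Omega,
    partial_zx_Omega, partial_zy_Omega, partial_zz_Omega by exact r2sq_pos.
  rewrite r2_triangular; fold a; unfold det3; rewrite Hmu.
  field [Hz0]; lra.
Qed.

End TriangularPoint.

Theorem mainTheorem2 (mu n k : R) :
  0 < mu < 1 -> 0 < n -> k < 0 ->
  0 < 2 * k / n ^ 2 + mu ->
  let a1 := 2 * k / n ^ 2 + mu - 1 in
  let b1 := Rpower (- mu / (2 * k)) (1 / 3) in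
  b1 ^ 2 > a1 ^ 2 ->
  forall z0 : R, z0 = sqrt (b1 ^ 2 - a1 ^ 2) \/ z0 = - sqrt (b1 ^ 2 - a1 ^ 2) ->
  let x0 := 2 * k / n ^ 2 in
  (* the point is an equilibrium of the system *)
  (partial_x (Omega n k mu) x0 0 z0 = 0 /\ partial_y (Omega n k mu) x0 0 z0 = 0 /\
   partial_z (Omega n k mu) x0 0 z0 = 0) /\
  (* the characteristic equation of the variational equations has a positive real root *)
  exists lam : R, 0 < lam /\ char_det n k mu x0 0 z0 lam = 0.
Proof.
  intros Hmu Hn Hk _ a1 b1 Hab z0 Hz0 x0.
  assert (Hc : 0 < - mu / (2 * k)).
  { replace (- mu / (2 * k)) with (mu / (- (2 * k))) by (field; lra).
    apply Rdiv_lt_0_compat; lra. }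
  assert (Hb : 0 < b1) by apply exp_pos.
  assert (Hmu_b : mu = - 2 * k * b1 ^ 3)
    by (unfold b1; rewrite Rpower_third_cube by exact Hc; field; lra).
  assert (Hz0sq : z0 ^ 2 = b1 ^ 2 - a1 ^ 2) by (apply pm_sqrt_pow2; [lra | exact Hz0]).
  split; [apply triangular_equilibrium with (b := b1); assumption |].
  destruct (even_sextic_neg_const_pos_root (2 * (n ^ 2 + 3 * k))
              (n ^ 2 * (n ^ 2 - 6 * k * (3 * a1 ^ 2 - 2 * b1 ^ 2) / b1 ^ 2))
              (6 * n ^ 4 * k * (b1 ^ 2 - a1 ^ 2) / b1 ^ 2)) as [lam [Hlam Hroot]].
  - apply Rdiv_neg_pos; [| apply pow_lt; lra].
    assert (0 < n ^ 4 * (b1 ^ 2 - a1 ^ 2))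
      by (apply Rmult_lt_0_compat; [apply pow_lt |]; lra).
    nra.
  - exists lam; split; [exact Hlam |].
    rewrite char_det_triangular with (b := b1) by assumption; exact Hroot.
Qed.
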